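(* Let $U,V,X$ be random variables with $U,V$ taking values in finite sets $\mathcal{U},\mathcal{V}$ and $X$ taking values in $\mathcal{X}=\{0,1,\dots,m-1\}$. Define random variables $U^*$ on $\mathcal{U}\times\{0,\dots,m-1\}$, $V^*$ on $\mathcal{V}\times\{0,\dots,m-1\}$ and $X^*$ on $\mathcal{X}$ (writing $u_i=(u,i)$, $v_j=(v,j)$) by $$P(U^*=u_i,V^*=v_j)=\tfrac1m P(U=u,V=v,X=(i-j)_m),$$ $$P(X^*=k\mid U^*=u_i,V^*=v_j)=\begin{cases}1 & k=(i-j)_m\\ 0&\text{otherwise,}\end{cases}$$ where $(l)_m$ denotes the remainder of $l$ modulo $m$. Then for all $u\in\mathcal{U}$, $v\in\mathcal{V}$ and $0\le i,k\le m-1$: (i) $P(U^*=u_i)=\frac1m P(U=u)$; (ii) $P(V^*=v_i)=\frac1m P(V=v)$; (iii) $P(X^*=k\mid U^*=u_i)=P(X=k\mid U=u)$ whenever $P(U=u)>0$; (iv) $P(X^*=k\mid V^*=v_i)=P(X=k\mid V=v)$ whenever $P(V=v)>0$. *)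

From HB Require Import structures.
From mathcomp Require Import all_boot all_order all_algebra.
Set Implicit Arguments. Unset Strict Implicit. Unset Printing Implicit Defensive.
Import Order.TTheory GRing.Theory Num.Theory.
Local Open Scope ring_scope.

Section Defs.
Variables (R : realFieldType) (U V : finType) (m : nat).

Lemma ord_pos (i : 'I_m) : (0 < m)%N.
Proof. exact: leq_ltn_trans (leq0n i) (ltn_ord i). Qed.

Definition subm (i j : 'I_m) : 'I_m :=
  Ordinal (ltn_pmod (i + m - j)%N (ord_pos i)).

(* joint pmf of (U,V,X): p u v x = P(U=u, V=v, X=x) *)
Definition is_pmf3 (p : U -> V -> 'I_m -> R) :=
  (forall u v x, 0 <= p u v x) /\ \sum_u \sum_v \sum_x p u v x = 1.

Definition PU (p : U -> V -> 'I_m -> R) u := \sum_v \sum_x p u v x.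
Definition PV (p : U -> V -> 'I_m -> R) v := \sum_u \sum_x p u v x.
Definition PXgU (p : U -> V -> 'I_m -> R) k u := (\sum_v p u v k) / PU p u.
Definition PXgV (p : U -> V -> 'I_m -> R) k v := (\sum_u p u v k) / PV p v.

Definition pUVstar (p : U -> V -> 'I_m -> R) (ui : U * 'I_m) (vj : V * 'I_m) : R :=
  m%:R^-1 * p ui.1 vj.1 (subm (ui.2) (vj.2)).
Definition pXstar_cond (k : 'I_m) (ui : U * 'I_m) (vj : V * 'I_m) : R :=
  (k == subm (ui.2) (vj.2))%:R.
Definition pstar (p : U -> V -> 'I_m -> R) ui vj k :=
  pUVstar p ui vj * pXstar_cond k ui vj.

Definition PUstar p (ui : U * 'I_m) := \sum_(vj : V * 'I_m) \sum_k pstar p ui vj k.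
Definition PVstar p (vj : V * 'I_m) := \sum_(ui : U * 'I_m) \sum_k pstar p ui vj k.
Definition PXgUstar p k (ui : U * 'I_m) :=
  (\sum_(vj : V * 'I_m) pstar p ui vj k) / PUstar p ui.
Definition PXgVstar p k (vj : V * 'I_m) :=
  (\sum_(ui : U * 'I_m) pstar p ui vj k) / PVstar p vj.
End Defs.

(* Summing out X* from the joint law of U*, V* and X*, and then summing over
   the index j of V* = v_j, leaves (1/m) P(U = u, V = v, X = k): the
   indicator of k = (i - j)_m selects exactly one j, because j |-> (i - j)_m is a
   bijection of {0, ..., m-1}.  The same holds with the roles of U and V
   exchanged, and all four identities follow by summing over the remaining
   variables; the factor 1/m cancels in the conditional probabilities. *)
From HB Require Import structures.
From mathcomp Require Import all_boot all_order all_algebra.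
Import Order.TTheory GRing.Theory Num.Theory.
Local Open Scope ring_scope.

Section SubMod.
Context {m : nat}.
Implicit Types i j : 'I_m.

Lemma submK i j : ((subm i j + j) %% m)%N = i.
Proof.
have le_jm : (j <= m)%N := ltnW (ltn_ord j).
rewrite /subm /= modnDml subnK ?(leq_trans le_jm (leq_addl i m)) //.
by rewrite modnDr modn_small.
Qed.

Lemma subm_injr i : injective (subm i).
Proof.
move=> j1 j2 eq_subm; apply/val_inj/eqP => /=.
rewrite -(modn_small (ltn_ord j1)) -(modn_small (ltn_ord j2)).
by rewrite -(eqn_modDl (subm i j1)) {2}eq_subm !submK.
Qed.

Lemma subm_injl j : injective (fun i => subm i j).
Proof.
by move=> i1 i2 eq_subm; apply/val_inj => /=; rewrite -(submK i1 j) eq_subm submK.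
Qed.

End SubMod.

Lemma sum_mul_eq_natr {R : pzSemiRingType} {I : finType} (F : I -> R) (x : I) :
  \sum_y F y * (x == y)%:R = F x.
Proof.
rewrite (eq_bigr (fun y => if y == x then F y else 0)) => [|y _].
  by rewrite -big_mkcond big_pred1_eq.
by rewrite eq_sym; case: eqP; rewrite ?mulr1 ?mulr0.
Qed.

Lemma sum_pair {R : nmodType} {A B : finType} (F : A * B -> R) :
  \sum_x F x = \sum_a \sum_b F (a, b).
Proof. by rewrite pair_bigA; apply: eq_bigr => -[]. Qed.

Section Marginals.
Variables (R : realFieldType) (U V : finType) (m : nat).
Variable p : U -> V -> 'I_m -> R.

Lemma sum_pstar_Vindex u i v k :
  \sum_j pstar p (u, i) (v, j) k = m%:R^-1 * p u v k.
Proof.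
rewrite -(sum_mul_eq_natr (fun x => m%:R^-1 * p u v x) k).
rewrite [RHS](reindex_inj (subm_injr i)).
by apply: eq_bigr => j _; rewrite /pstar /pUVstar /pXstar_cond.
Qed.

Lemma sum_pstar_Uindex u v i k :
  \sum_j pstar p (u, j) (v, i) k = m%:R^-1 * p u v k.
Proof.
rewrite -(sum_mul_eq_natr (fun x => m%:R^-1 * p u v x) k).
rewrite [RHS](reindex_inj (subm_injl i)).
by apply: eq_bigr => j _; rewrite /pstar /pUVstar /pXstar_cond.
Qed.

Lemma PUstarE u i : PUstar p (u, i) = m%:R^-1 * PU p u.
Proof.
rewrite /PUstar sum_pair /= /PU mulr_sumr; apply: eq_bigr => v _.
by rewrite exchange_big mulr_sumr; apply: eq_bigr => k _; rewrite sum_pstar_Vindex.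
Qed.

Lemma PVstarE v i : PVstar p (v, i) = m%:R^-1 * PV p v.
Proof.
rewrite /PVstar sum_pair /= /PV mulr_sumr; apply: eq_bigr => u _.
by rewrite exchange_big mulr_sumr; apply: eq_bigr => k _; rewrite sum_pstar_Uindex.
Qed.

Lemma sum_pstar_Ustar u i k :
  \sum_vj pstar p (u, i) vj k = m%:R^-1 * \sum_v p u v k.
Proof.
by rewrite sum_pair mulr_sumr; apply: eq_bigr => v _; rewrite sum_pstar_Vindex.
Qed.

Lemma sum_pstar_Vstar v i k :
  \sum_ui pstar p ui (v, i) k = m%:R^-1 * \sum_u p u v k.
Proof.
by rewrite sum_pair mulr_sumr; apply: eq_bigr => u _; rewrite sum_pstar_Uindex.
Qed.

End Marginals.

Lemma divf_scale (F : fieldType) (c x y : F) : c != 0 -> (c * x) / (c * y) = x / y.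
Proof. by move=> c0; rewrite invfM mulrACA mulfV ?mul1r. Qed.

Theorem lemma3p3 (R : realFieldType) (U V : finType) (m : nat)
  (p : U -> V -> 'I_m -> R) (hp : is_pmf3 p) :
  forall (u : U) (v : V) (i k : 'I_m),
    [/\ PUstar p (u, i) = m%:R^-1 * PU p u,
        PVstar p (v, i) = m%:R^-1 * PV p v,
        0 < PU p u -> PXgUstar p k (u, i) = PXgU p k u
      & 0 < PV p v -> PXgVstar p k (v, i) = PXgV p k v].
Proof.
move=> u v i k.
have invm_neq0 : (m%:R : R)^-1 != 0 by rewrite invr_eq0 pnatr_eq0 -lt0n (ord_pos i).
split=> [||_|_].
- exact: PUstarE.
- exact: PVstarE.
- by rewrite /PXgUstar sum_pstar_Ustar PUstarE divf_scale.
- by rewrite /PXgVstar sum_pstar_Vstar PVstarE divf_scale.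
Qed.
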